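(* Let $p$ be an odd prime and $0\le k\le\frac{p-1}{2}$. Then $$\begin{bmatrix}\frac{p-1}{2}+k\\2k\end{bmatrix}_{q^2}\equiv(-1)^k\begin{bmatrix}2k\\k\end{bmatrix}_{q^2}\frac{q^{kp-k^2}}{(-q;q)_{2k}^2}\pmod{[p]^2}.$$
   Context: For an indeterminate $q$ and an integer $n\ge 0$: $(a;q)_0=1$ and $(a;q)_n=(1-a)(1-aq)\cdots(1-aq^{n-1})$. The $q$-binomial coefficient is $\begin{bmatrix}n\\k\end{bmatrix}_q=\frac{(q^{n-k+1};q)_k}{(q;q)_k}$ if $0\le k\le n$ and $0$ otherwise. For a positive integer $p$, $[p]=\frac{1-q^p}{1-q}=1+q+\cdots+q^{p-1}$. For a prime $p$, $[p]$ is irreducible in $\mathbb{Q}[q]$; for rational functions $A,B$ of $q$ whose denominators are coprime to $[p]$, $A\equiv B\pmod{[p]^r}$ means that $A-B$, written in lowest terms, has numerator divisible by $[p]^r$ in $\mathbb{Q}[q]$. *)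

From HB Require Import structures.
From mathcomp Require Import all_boot all_order all_algebra.
From mathcomp Require Import fraction.
Set Implicit Arguments. Unset Strict Implicit. Unset Printing Implicit Defensive.
Import Order.TTheory GRing.Theory Num.Theory.
Local Open Scope ring_scope.

(* Q(q): the field of rational functions in the indeterminate q over Q. *)
Notation RF := {fraction {poly rat}}.

Definition toRF (x : {poly rat}) : RF := @FracField.tofrac _ x.

Definition qX : RF := toRF 'X.

Definition qpoch (a b : RF) (n : nat) : RF := \prod_(i < n) (1 - a * b ^+ i).

Definition qbinom (b : RF) (n k : nat) : RF :=
  if (k <= n)%N then qpoch (b ^+ (n - k + 1)) b k / qpoch b b k else 0.

Definition qint (p : nat) : {poly rat} := \sum_(i < p) 'X^i.

(* A rational function whose denominator (in some, hence in lowest-terms,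
   representation) is coprime to m. *)
Definition den_coprime (m : {poly rat}) (x : RF) : Prop :=
  exists (n d : {poly rat}), d != 0 /\ coprimep d m /\ x = toRF n / toRF d.

(* A == B (mod m): both denominators coprime to m, and A - B written in lowest
   terms has numerator divisible by m.  (Equivalently: A - B = n/d with d coprime
   to m and m | n, since passing to lowest terms only divides n by a factor
   of d, which is coprime to m.) *)
Definition qcong (m : {poly rat}) (A B : RF) : Prop :=
  den_coprime m A /\ den_coprime m B /\
  exists (n d : {poly rat}), d != 0 /\ coprimep d m /\ (m %| n)%R /\ A - B = toRF n / toRF d.

(* Write p = 2n + 1.  The numerator of the left-hand side is the product of the
   1 - q^(2n+2-2k+2j), j < 2k; grouping the factors symmetrically about q^p
   gives the products (1 - q^(p-m)) (1 - q^(p+m)) with m = 1, 3, ..., 2k-1, and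

     (1 - q^(p-m)) (1 - q^(p+m)) + q^(p-m) (1 - q^m)^2 = (1 - q^p)^2,

   so each is -q^(p-m) (1 - q^m)^2 modulo [p]^2.  The product of these residues is
   (-1)^k q^(kp-k^2) (q;q^2)_k^2, and since
   (q^2;q^2)_2k = (q;q^2)_k (q^2;q^2)_k (-q;q)_2k the right-hand side is exactly
   this over the same denominator (q^2;q^2)_2k.  That denominator is prime to [p]:
   a common factor of 1 - q^j and [p] divides q^gcd(j,p) - 1 = q - 1, while [p]
   is 1 + ... + 1 = p at q = 1. *)

From HB Require Import structures.
From mathcomp Require Import all_boot all_order all_algebra.
From mathcomp Require Import fraction.
From mathcomp Require Import ring zify.
Set Implicit Arguments. Unset Strict Implicit. Unset Printing Implicit Defensive.
Import GRing.Theory Num.Theory.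
Local Open Scope ring_scope.

Lemma qint_mulXsub1 p : qint p * ('X - 1) = 'X^p - 1.
Proof.
elim: p => [|p IHp]; first by rewrite /qint big_ord0 mul0r expr0 subrr.
by rewrite /qint big_ord_recr /= mulrDl -/(qint p) IHp exprS; ring.
Qed.

Lemma coprimep_qint_Xsub1 p : (0 < p)%N -> coprimep (qint p) ('X - 1).
Proof.
move=> p_gt0; rewrite -polyC1 coprimep_XsubC /root /qint horner_sum.
under eq_bigr => i _ do rewrite hornerXn expr1n.
by rewrite sumr_const card_ord pnatr_eq0 -lt0n.
Qed.

Lemma subXn_neq0 (R : comNzRingType) m : (0 < m)%N -> (1 - 'X^m : {poly R}) != 0.
Proof.
move=> m_gt0; apply/eqP => /(congr1 (horner^~ 0)).
rewrite hornerD hornerN hornerXn hornerC expr0n gtn_eqF // subr0 horner0.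
by apply/eqP; rewrite oner_eq0.
Qed.

Lemma addXn_neq0 (R : comNzRingType) m : (0 < m)%N -> (1 + 'X^m : {poly R}) != 0.
Proof.
move=> m_gt0; apply/eqP => /(congr1 (horner^~ 0)).
rewrite hornerD hornerXn hornerC expr0n gtn_eqF // addr0 horner0.
by apply/eqP; rewrite oner_eq0.
Qed.

Section PolyField.
Variable F : fieldType.
Implicit Types d : {poly F}.

Lemma dvdp_Xn_sub1_gcdn d a b :
  d %| 'X^a - 1 -> d %| 'X^b - 1 -> d %| 'X^(gcdn a b) - 1.
Proof.
elim: {a b}(a + b)%N {-2}a {-2}b (leqnn (a + b)) => [|n IHn] a b.
  by rewrite leqn0 addn_eq0 => /andP[/eqP -> /eqP ->].
wlog le_ab : a b / (a <= b)%N => [W|].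
  by case: (leqP a b) => [|/ltnW] le; [exact: W | rewrite addnC gcdnC => *; exact: W].
move=> le_abn da db; have [->|a_gt0] := posnP a; first by rewrite gcd0n.
have [c def_b] : exists c, b = (a + c)%N by exists (b - a)%N; rewrite subnKC.
subst b; rewrite gcdnDl; apply: (IHn a c) => //; first lia.
have -> : 'X^c - 1 = ('X^(a + c) - 1) - 'X^c * ('X^a - 1) :> {poly F}.
  by rewrite exprD; ring.
by rewrite dvdp_sub // dvdp_mull.
Qed.

Lemma coprimep_prod I r (P : pred I) (G : I -> {poly F}) q :
  (forall i, P i -> coprimep (G i) q) -> coprimep (\prod_(i <- r | P i) G i) q.
Proof.
move=> cG; apply: (big_ind (fun x => coprimep x q)) => //; first exact: coprime1p.
by move=> x y cx cy; rewrite coprimepMl cx cy.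
Qed.

Lemma dvdp_prod_sub d n (G H : nat -> {poly F}) :
  (forall i, (i < n)%N -> d %| G i - H i) ->
  d %| \prod_(i < n) G i - \prod_(i < n) H i.
Proof.
elim: n => [|n IHn] dGH; first by rewrite !big_ord0 subrr dvdp0.
rewrite !big_ord_recr /=.
have -> : (\prod_(i < n) G i) * G n - (\prod_(i < n) H i) * H n =
  (\prod_(i < n) G i) * (G n - H n) + (\prod_(i < n) G i - \prod_(i < n) H i) * H n.
  by ring.
apply: dvdp_add; first by rewrite dvdp_mull ?dGH.
by rewrite dvdp_mulr // IHn // => i /ltnW; exact: dGH.
Qed.

End PolyField.

Lemma odd_prime_dvdn_double p m : prime p -> odd p -> (p %| 2 * m)%N = (p %| m)%N.
Proof.
move=> p_pr p_odd; rewrite Euclid_dvdM // dvdn_prime2 //.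
by case: eqP p_odd => [->|].
Qed.

Lemma coprimep_Xn_sub1_qint p m : prime p -> ~~ (p %| m)%N ->
  coprimep ('X^m - 1) (qint p).
Proof.
move=> p_pr p_ndvd_m; apply/coprimepP => d dm dp.
have dXp : d %| 'X^p - 1 by rewrite -qint_mulXsub1 dvdp_mulr.
have cop_mp : coprime m p by rewrite coprime_sym prime_coprime.
have := dvdp_Xn_sub1_gcdn dm dXp; rewrite (eqP cop_mp) expr1.
by move/coprimepP: (coprimep_qint_Xsub1 (prime_gt0 p_pr)); apply.
Qed.

Lemma coprimep_subXn_qint p m : prime p -> ~~ (p %| m)%N ->
  coprimep (1 - 'X^m) (qint p).
Proof.
move=> p_pr p_ndvd_m; rewrite -opprB -scaleN1r coprimepZl ?oppr_eq0 ?oner_eq0 //.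
exact: coprimep_Xn_sub1_qint.
Qed.

Lemma pair_identity (R : comPzRingType) (x : R) r c :
  (1 - x ^+ r) * (1 - x ^+ (r + c + c)) + x ^+ r * (1 - x ^+ c) ^+ 2 =
  (1 - x ^+ (r + c)) ^+ 2.
Proof. by rewrite !exprD; ring. Qed.

Lemma pair_cong p m : (m <= p)%N ->
  qint p ^+ 2 %| (1 - 'X^(p - m)) * (1 - 'X^(p + m)) - - ('X^(p - m) * (1 - 'X^m) ^+ 2).
Proof.
move=> le_mp; rewrite opprK.
have -> : (p + m = p - m + m + m)%N by rewrite subnK.
rewrite pair_identity subnK // -opprB -qint_mulXsub1 sqrrN exprMn.
exact: dvdp_mulr.
Qed.

Definition poch_q m : {poly rat} := \prod_(i < m) (1 - 'X^(i.+1)).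
Definition poch_q2 m : {poly rat} := \prod_(i < m) (1 - 'X^(2 + 2 * i)).
Definition poch_odd m : {poly rat} := \prod_(i < m) (1 - 'X^(2 * i + 1)).
Definition poch_negq m : {poly rat} := \prod_(i < m) (1 + 'X^(i.+1)).

Lemma poch_q_mul_negq m : poch_q m * poch_negq m = poch_q2 m.
Proof.
rewrite -big_split; apply: eq_bigr => i _ /=.
by rewrite (_ : 2 + 2 * i = i.+1 * 2)%N ?exprM; [ring | lia].
Qed.

Lemma poch_q_double k : poch_q (2 * k) = poch_odd k * poch_q2 k.
Proof.
elim: k => [|k IHk]; first by rewrite /poch_q /poch_odd /poch_q2 !big_ord0 mulr1.
rewrite mulnS /poch_q !big_ord_recr /= -/(poch_q (2 * k)) IHk.
by rewrite /poch_odd /poch_q2 !big_ord_recr /= addn1 (_ : 2 + 2 * k = (2 * k).+2)%N; [ring | lia].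
Qed.

Lemma poch_q2_double k : poch_q2 (2 * k) = poch_odd k * poch_q2 k * poch_negq (2 * k).
Proof. by rewrite -poch_q_mul_negq poch_q_double. Qed.

Lemma poch_q2_neq0 m : poch_q2 m != 0.
Proof. by apply/prodf_neq0 => i _; rewrite subXn_neq0. Qed.

Lemma poch_negq_neq0 m : poch_negq m != 0.
Proof. by apply/prodf_neq0 => i _; rewrite addXn_neq0. Qed.

Lemma poch_odd_neq0 m : poch_odd m != 0.
Proof. by apply/prodf_neq0 => i _; rewrite subXn_neq0 // addn1. Qed.

Lemma qpoch_Xn a b m :
  qpoch (qX ^+ a) (qX ^+ b) m = toRF (\prod_(i < m) (1 - 'X^(a + b * i))).
Proof.
rewrite /qpoch /qX /toRF rmorph_prod; apply: eq_bigr => i _.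
by rewrite rmorphB rmorph1 rmorphXn -exprM -exprD.
Qed.

Lemma qpoch_negX m : qpoch (- qX) qX m = toRF (poch_negq m).
Proof.
rewrite /qpoch /qX /poch_negq /toRF rmorph_prod; apply: eq_bigr => i _.
by rewrite rmorphD rmorph1 rmorphXn mulNr opprK -exprS.
Qed.

Lemma qbinom_X2 n k : (k <= n)%N ->
  qbinom (qX ^+ 2) n k =
  toRF (\prod_(i < k) (1 - 'X^(2 * (n - k + 1) + 2 * i))) / toRF (poch_q2 k).
Proof. by move=> le_kn; rewrite /qbinom le_kn -exprM !qpoch_Xn. Qed.

Lemma poch_q2_add m n :
  poch_q2 (m + n) = poch_q2 m * \prod_(i < n) (1 - 'X^(2 * (m + 1) + 2 * i)).
Proof.
rewrite /poch_q2 big_split_ord /=; congr (_ * _).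
by apply: eq_bigr => i _; congr (1 - 'X^_); lia.
Qed.

Lemma poch_q2_central k :
  \prod_(i < k) (1 - 'X^(2 * (2 * k - k + 1) + 2 * i)) = poch_odd k * poch_negq (2 * k).
Proof.
apply: (mulfI (poch_q2_neq0 k)); rewrite mulrA (mulrC _ (poch_odd k)) -poch_q2_double.
have -> : (2 * k = k + k)%N by lia.
by rewrite poch_q2_add addnK.
Qed.

Lemma qbinom_central_ratio k e :
  (-1) ^+ k * qbinom (qX ^+ 2) (2 * k) k * qX ^+ e / qpoch (- qX) qX (2 * k) ^+ 2 =
  toRF ((-1) ^+ k * 'X^e * poch_odd k ^+ 2) / toRF (poch_q2 (2 * k)).
Proof.
have cancel_negq (F : fieldType) (s y o q r : F) : o != 0 -> q != 0 -> r != 0 ->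
    s * (o * r / q) * y / r ^+ 2 = s * y * (o * o) / (o * q * r).
  by move=> no nq nr; field; rewrite no nq nr.
rewrite qbinom_X2 ?leq_pmull // poch_q2_central qpoch_negX poch_q2_double.
rewrite /qX /toRF !tofracM !tofracXn tofracN tofrac1.
by rewrite cancel_negq ?tofrac_eq0 ?poch_odd_neq0 ?poch_q2_neq0 ?poch_negq_neq0.
Qed.

Lemma coprimep_poch_q2_qint p m : prime p -> odd p -> (m < p)%N ->
  coprimep (poch_q2 m) (qint p ^+ 2).
Proof.
move=> p_pr p_odd lt_mp; apply/coprimep_expr/coprimep_prod => i _.
rewrite (_ : 2 + 2 * i = 2 * i.+1)%N; last lia.
rewrite coprimep_subXn_qint // odd_prime_dvdn_double // gtnNdvd //.
exact: leq_ltn_trans (ltn_ord i) lt_mp.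
Qed.

Lemma prod_central_pairs n k : (k <= n)%N ->
  \prod_(i < 2 * k) (1 - 'X^(2 * (n + k - 2 * k + 1) + 2 * i)) =
  \prod_(i < k) ((1 - 'X^(2 * n + 1 - (2 * i + 1))) * (1 - 'X^(2 * n + 1 + (2 * i + 1))))
  :> {poly rat}.
Proof.
move=> le_kn; rewrite (_ : 2 * k = k + k)%N; last lia.
rewrite big_split_ord big_split /=; congr (_ * _).
  rewrite (reindex_inj rev_ord_inj); apply: eq_bigr => i _ /=.
  by congr (1 - 'X^_); have := ltn_ord i; lia.
by apply: eq_bigr => i _; congr (1 - 'X^_); lia.
Qed.

Lemma prod_pair_residues p k : (2 * k <= p)%N ->
  \prod_(i < k) - ('X^(p - (2 * i + 1)) * (1 - 'X^(2 * i + 1)) ^+ 2) =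
  (-1) ^+ k * 'X^(k * p - k ^ 2) * poch_odd k ^+ 2.
Proof.
move=> le_2kp; rewrite prodrN card_ord big_split /= prodrXr prodrXl -mulrA.
congr (_ * ('X^_ * _)); elim: k le_2kp => [|k IHk] le_2kp; first by rewrite big_ord0.
by rewrite big_ord_recr /= IHk; nia.
Qed.

Lemma qint_dvd_central_num n k : (k <= n)%N ->
  qint (2 * n + 1) ^+ 2 %|
    \prod_(i < 2 * k) (1 - 'X^(2 * (n + k - 2 * k + 1) + 2 * i))
    - (-1) ^+ k * 'X^(k * (2 * n + 1) - k ^ 2) * poch_odd k ^+ 2.
Proof.
move=> le_kn; rewrite prod_central_pairs // -prod_pair_residues; last lia.
pose G i := (1 - 'X^(2 * n + 1 - (2 * i + 1))) * (1 - 'X^(2 * n + 1 + (2 * i + 1))) : {poly rat}.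
pose H i := - ('X^(2 * n + 1 - (2 * i + 1)) * (1 - 'X^(2 * i + 1)) ^+ 2) : {poly rat}.
by apply: (@dvdp_prod_sub _ _ _ G H) => i lt_ik; apply: pair_cong; lia.
Qed.

Lemma qcong_frac m a c d : d != 0 -> coprimep d m -> m %| a - c ->
  qcong m (toRF a / toRF d) (toRF c / toRF d).
Proof.
move=> nz_d cop_d dvd_ac; split; [by exists a, d | split; first by exists c, d].
by exists (a - c), d; rewrite /toRF tofracB mulrBl.
Qed.

Theorem lemma3p1 (p k : nat) :
  prime p -> odd p -> (k <= (p - 1) %/ 2)%N ->
  qcong ((qint p) ^+ 2)
    (qbinom (qX ^+ 2) ((p - 1) %/ 2 + k) (2 * k))
    ((-1) ^+ k * qbinom (qX ^+ 2) (2 * k) k * qX ^+ (k * p - k ^ 2)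
       / (qpoch (- qX) qX (2 * k)) ^+ 2).
Proof.
move=> p_pr p_odd.
have [n def_p] : exists n, p = (2 * n + 1)%N.
  by exists p./2; rewrite -[p in LHS]odd_double_half p_odd; lia.
rewrite [in ((p - 1) %/ 2)%N]def_p addnK mulKn // => le_kn.
rewrite qbinom_X2 ?qbinom_central_ratio; last lia.
apply: qcong_frac; first exact: poch_q2_neq0.
  by apply: coprimep_poch_q2_qint; rewrite // def_p; lia.
by rewrite def_p; apply: qint_dvd_central_num.
Qed.
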